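(* For integers $p\ge1$ and $0\le k\le n$, and all $x$, \[ \sum_{j=0}^{n-k}\binom{n-k}{j}B_{j+k}^{(p)}(x)=\sum_{j=0}^{k}\binom{k}{j}(-1)^{j}\Big\{B_{n-j}^{(p)}(x)+(n-j)B_{n-j-1}^{(p-1)}(x)\Big\}, \] where the term $(n-j)B^{(p-1)}_{n-j-1}(x)$ is taken to be $0$ when $n-j=0$.
   Context: For $p\ge1$, $B_n^{(p)}(x)$ denotes the higher-order Bernoulli polynomial with all parameters equal to $1$: $\sum_{n\ge0}B_n^{(p)}(x)\frac{t^n}{n!}=e^{xt}\left(\frac{t}{e^t-1}\right)^p$; in particular $B_n^{(0)}(x)=x^n$. *)

From HB Require Import structures.
From mathcomp Require Import all_boot all_order all_algebra.
Set Implicit Arguments. Unset Strict Implicit. Unset Printing Implicit Defensive.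
Import Order.TTheory GRing.Theory Num.Theory.
Local Open Scope ring_scope.

(* Bernoulli numbers B_0, ..., B_n defined by t/(e^t-1) = sum B_k t^k/k!,
   i.e. by the coefficient recursion  sum_{k=0}^{m} C(m+1,k) B_k = [m = 0]:
   B_0 = 1,  B_m = -1/(m+1) * sum_{k<m} C(m+1,k) B_k  (m >= 1). *)
Fixpoint bern_seq (R : numFieldType) (n : nat) : seq R :=
  match n with
  | 0 => [:: 1]
  | n'.+1 =>
      let s := bern_seq R n' in
      rcons s (- (n'.+2%:R)^-1 * \sum_(k < n'.+1) 'C(n'.+2, k)%:R * s`_k)
  end.

Definition bern (R : numFieldType) (n : nat) : R := (bern_seq R n)`_n.

(* Higher-order Bernoulli polynomials B_n^{(p)}(x), all parameters 1:
   sum_n B_n^{(p)}(x) t^n/n! = e^{xt} (t/(e^t-1))^p.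
   B_n^{(0)}(x) = x^n and, since the EGF of order p+1 is the product of the
   EGF of order p with t/(e^t-1), the Cauchy product of exponential series gives
   B_n^{(p+1)}(x) = sum_k C(n,k) B_k B_{n-k}^{(p)}(x). *)
Fixpoint hbern (R : numFieldType) (p n : nat) (x : R) : R :=
  match p with
  | 0 => x ^+ n
  | p'.+1 => \sum_(k < n.+1) 'C(n, k)%:R * bern R k * hbern p' (n - k) x
  end.

From HB Require Import structures.
From mathcomp Require Import all_boot all_order all_algebra.
From mathcomp Require Import ring.
Import Order.TTheory GRing.Theory Num.Theory.
Set Implicit Arguments. Unset Strict Implicit. Unset Printing Implicit Defensive.
Local Open Scope ring_scope.

(* Proof strategy.
   Write H_m := B_m^{(p)}(x).  The theorem splits into two independent facts.

   (1) Translation formula: sum_i C(m,i) B_i^{(q+1)}(x) = B_m^{(q+1)}(x) +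
       m B_{m-1}^{(q)}(x), i.e. B_m^{(q+1)}(x+1) = B_m^{(q+1)}(x) + m B_{m-1}^{(q)}(x).
       Since B^{(q+1)} is the binomial convolution of the Bernoulli numbers with
       B^{(q)}, it follows from commutativity/associativity of binomial
       convolution (proved through truncated exponential generating polynomials)
       and from B_m(1) = B_m + [m = 1], which is the defining recursion of B_m.

   (2) A purely combinatorial identity valid for every sequence H:
       sum_j C(n-k,j) H_{j+k} = sum_j C(k,j) (-1)^j sum_i C(n-j,i) H_i.
       Reading polynomials umbrally (X^i |-> H_i), the left side is the image of
       (X+1)^(n-k) X^k and the right side that of the expansion of X^k as
       ((X+1) - 1)^k; the identity is the linearity of the umbral functional.

   The theorem is (2) for H = B^{(p)}(x), with the inner sums rewritten by (1). *)

(* Binomial convolution of sequences: the product of exponential generating series. *)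
Definition binconv (R : numFieldType) (u v : nat -> R) (m : nat) : R :=
  \sum_(k < m.+1) 'C(m, k)%:R * u k * v (m - k)%N.

Definition egf (R : numFieldType) (u : nat -> R) (N : nat) : {poly R} :=
  \poly_(i < N) (u i / (i`!)%:R).

Section BinomialConvolution.
Variable R : numFieldType.
Implicit Types (u v w : nat -> R) (P Q : {poly R}).

Lemma natr_fact_neq0 j : (j`!)%:R != 0 :> R.
Proof. by rewrite pnatr_eq0 -lt0n fact_gt0. Qed.

Lemma binconv_egf u v N m : (m < N)%N ->
  binconv u v m = (m`!)%:R * (egf u N * egf v N)`_m.
Proof.
move=> ltmN; rewrite coefM mulr_sumr; apply: eq_bigr => -[j /=]; rewrite ltnS => lejm _.
rewrite !coef_poly (leq_ltn_trans lejm ltmN) (leq_ltn_trans (leq_subr j m) ltmN).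
rewrite -(bin_fact lejm) !natrM.
have jF := natr_fact_neq0 j; have mjF := natr_fact_neq0 (m - j).
by field; rewrite jF mjF.
Qed.

Lemma coef_egf_binconv u v N j : (j < N)%N ->
  (egf (binconv u v) N)`_j = (egf u N * egf v N)`_j.
Proof.
move=> ltjN; rewrite coef_poly ltjN (binconv_egf _ _ ltjN).
by rewrite mulrC mulrA mulVf ?mul1r // natr_fact_neq0.
Qed.

Lemma coefM_low P P' Q m :
  (forall j, (j <= m)%N -> P`_j = P'`_j) -> (P * Q)`_m = (P' * Q)`_m.
Proof.
by move=> eqPP'; rewrite !coefM; apply: eq_bigr => -[j /=]; rewrite ltnS => /eqPP' ->.
Qed.

Lemma binconvC u v m : binconv u v m = binconv v u m.
Proof. by rewrite !(binconv_egf _ _ (ltnSn m)) [egf u _ * _]mulrC. Qed.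

Lemma binconvA u v w m :
  binconv (binconv u v) w m = binconv u (binconv v w) m.
Proof.
rewrite !(binconv_egf _ _ (ltnSn m)); congr (_ * _).
rewrite (@coefM_low _ (egf u m.+1 * egf v m.+1)); last first.
  by move=> j lejm; rewrite coef_egf_binconv.
rewrite [egf u _ * egf (binconv _ _) _]mulrC [RHS](@coefM_low _ (egf v m.+1 * egf w m.+1)); last first.
  by move=> j lejm; rewrite coef_egf_binconv.
by rewrite [in RHS]mulrC mulrA.
Qed.

End BinomialConvolution.

Section Bernoulli.
Variable R : numFieldType.

Lemma size_bern_seq n : size (bern_seq R n) = n.+1.
Proof. by elim: n => //= n IH; rewrite size_rcons IH. Qed.

Lemma nth_bern_seq n k : (k <= n)%N -> (bern_seq R n)`_k = bern R k.
Proof.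
elim: n k => [|n IH] k; first by rewrite leqn0 => /eqP ->.
rewrite leq_eqVlt => /orP[/eqP -> // | ltkn].
by rewrite /= nth_rcons size_bern_seq ltkn IH.
Qed.

Lemma bernS n : bern R n.+1 =
  - (n.+2%:R)^-1 * \sum_(k < n.+1) 'C(n.+2, k)%:R * bern R k.
Proof.
rewrite {1}/bern /= nth_rcons size_bern_seq ltnn eqxx; congr (_ * _).
by apply: eq_bigr => -[i /= ltin] _; rewrite nth_bern_seq // -ltnS.
Qed.

Lemma bern_recursion n :
  \sum_(k < n.+1) 'C(n.+1, k)%:R * bern R k = (n == 0%N)%:R.
Proof.
case: n => [|n]; first by rewrite big_ord1 bin0 mul1r.
rewrite big_ord_recr /= binSn bernS mulrA mulrN mulfV ?pnatr_eq0 //.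
by rewrite mulN1r addrN.
Qed.

(* B_m(1) = B_m + [m = 1]: convolving the Bernoulli numbers with e^t. *)
Lemma binconv_bern_one m :
  binconv (bern R) (fun=> 1) m = bern R m + (m == 1%N)%:R.
Proof.
rewrite /binconv; case: m => [|m]; first by rewrite big_ord1 bin0 mul1r mulr1 addr0.
under eq_bigr do rewrite mulr1.
by rewrite big_ord_recr /= bern_recursion binn mul1r eqSS addrC.
Qed.

End Bernoulli.

Lemma binconv_indicator1 (R : numFieldType) (F : nat -> R) m :
  binconv (fun k => (k == 1%N)%:R) F m = m%:R * F m.-1.
Proof.
case: m => [|m]; first by rewrite /binconv big_ord1 mulr0 mul0r.
rewrite /binconv big_ord_recl mulr0 mul0r add0r big_ord_recl /= big1 ?addr0.
  by rewrite bin1 mulr1 subn1.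
by move=> i _; rewrite mulr0 mul0r.
Qed.

(* Translation formula B_m^{(q+1)}(x+1) = B_m^{(q+1)}(x) + m B_{m-1}^{(q)}(x),
   with the left side expanded as sum_i C(m,i) B_i^{(q+1)}(x). *)
Lemma hbern_translate (R : numFieldType) (q m : nat) (x : R) :
  \sum_(i < m.+1) 'C(m, i)%:R * hbern q.+1 i x =
  hbern q.+1 m x + m%:R * hbern q m.-1 x.
Proof.
set H := hbern q ^~ x.
have -> : \sum_(i < m.+1) 'C(m, i)%:R * hbern q.+1 i x =
          binconv (binconv (bern R) H) (fun=> 1) m.
  by apply: eq_bigr => i _; rewrite mulr1.
rewrite binconvC -binconvA {1}/binconv.
under eq_bigr do rewrite binconvC binconv_bern_one mulrDr mulrDl.
by rewrite big_split /= -(binconv_indicator1 H).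
Qed.

(* The umbral functional P |-> sum_{i < N} P_i H_i, where X^i stands for H_i. *)
Definition umbral (R : numFieldType) (H : nat -> R) (N : nat) (P : {poly R}) : R :=
  \sum_(i < N) P`_i * H i.

Lemma coef_XaddC1_exp (R : numFieldType) m i :
  ((('X : {poly R}) + 1) ^+ m)`_i = 'C(m, i)%:R.
Proof.
rewrite addrC exprDn coef_sum.
rewrite (eq_bigr (fun j : 'I_m.+1 => if j == i :> nat then 'C(m, j)%:R else 0)).
  rewrite -big_mkcond (big_ord1_eq _ (fun j => 'C(m, j)%:R)).
  by case: ifP => // /negbT; rewrite -leqNgt => /bin_small ->.
move=> j _; rewrite coefMn expr1n mul1r coefXn eq_sym.
by case: eqP => _; rewrite ?mul0rn.
Qed.

Section Umbral.
Variables (R : numFieldType) (H : nat -> R).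

Lemma umbral_lin N (I : nat) (c : nat -> R) (P : nat -> {poly R}) :
  umbral H N (\sum_(j < I) c j *: P j) = \sum_(j < I) c j * umbral H N (P j).
Proof.
rewrite /umbral; under eq_bigr do rewrite coef_sum big_distrl.
rewrite exchange_big; apply: eq_bigr => j _; rewrite mulr_sumr.
by apply: eq_bigr => i _; rewrite coefZ mulrA.
Qed.

Lemma umbral_XaddC1_exp N m : (m < N)%N ->
  \sum_(i < m.+1) 'C(m, i)%:R * H i = umbral H N ((('X : {poly R}) + 1) ^+ m).
Proof.
move=> ltmN; rewrite /umbral; under [RHS]eq_bigr do rewrite coef_XaddC1_exp.
rewrite (big_ord_widen _ (fun i => 'C(m, i)%:R * H i) ltmN) big_mkcond.
apply: eq_bigr => i _; case: ifP => // /negbT; rewrite -leqNgt => ltmi.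
by rewrite bin_small // mul0r.
Qed.

Lemma umbral_XaddC1_exp_mulXn n k : (k <= n)%N ->
  \sum_(j < (n - k).+1) 'C(n - k, j)%:R * H (j + k)%N =
  umbral H n.+1 ((('X : {poly R}) + 1) ^+ (n - k) * 'X^k).
Proof.
move=> lekn; rewrite /umbral; under [RHS]eq_bigr do rewrite coefMXn coef_XaddC1_exp.
rewrite -(big_mkord xpredT (fun i => (if (i < k)%N then 0 else 'C(n - k, i - k)%:R) * H i)).
rewrite (big_cat_nat (leq0n k) (leqW lekn)) /= [in RHS]big1_seq ?add0r; last first.
  by move=> i; rewrite mem_index_iota => /andP[_ /andP[_ ->]]; rewrite mul0r.
rewrite -[in RHS](add0n k) big_addn !add0n subSn // big_mkord.
by apply: eq_bigr => i _; rewrite ltnNge leq_addl /= addnK.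
Qed.

End Umbral.

(* X^k = ((X+1) - 1)^k, multiplied by (X+1)^(n-k). *)
Lemma XaddC1_exp_mulXn (R : numFieldType) n k : (k <= n)%N ->
  (('X : {poly R}) + 1) ^+ (n - k) * 'X^k =
  \sum_(j < k.+1) ('C(k, j)%:R * (-1) ^+ j) *: (('X : {poly R}) + 1) ^+ (n - j).
Proof.
move=> lekn; rewrite -{2}['X](addrK 1) [X in _ * X]exprDn mulr_sumr.
apply: eq_bigr => -[j /=]; rewrite ltnS => lejk _.
have nkkj : (n - k + (k - j) = n - j)%N by rewrite addnBA // subnK.
rewrite mulrnAr mulrA -exprD nkkj -scalerA scaler_nat.
by rewrite -mul_polyC rmorphXn rmorphN1 mulrC.
Qed.

Lemma binomial_shift_identity (R : numFieldType) (H : nat -> R) n k : (k <= n)%N ->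
  \sum_(j < (n - k).+1) 'C(n - k, j)%:R * H (j + k)%N =
  \sum_(j < k.+1) 'C(k, j)%:R * (-1) ^+ j *
     \sum_(i < (n - j).+1) 'C(n - j, i)%:R * H i.
Proof.
move=> lekn; rewrite (umbral_XaddC1_exp_mulXn H lekn) XaddC1_exp_mulXn //.
rewrite (umbral_lin H _ _ (fun j => 'C(k, j)%:R * (-1) ^+ j)
                    (fun j => (('X : {poly R}) + 1) ^+ (n - j))).
apply: eq_bigr => j _.
by rewrite (umbral_XaddC1_exp H (N := n.+1)) // ltnS leq_subr.
Qed.

Theorem mainTheorem9 (R : numFieldType) (p n k : nat) (x : R) :
  (1 <= p)%N -> (k <= n)%N ->
  \sum_(j < (n - k).+1) 'C(n - k, j)%:R * hbern p (j + k) x =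
  \sum_(j < k.+1) 'C(k, j)%:R * (-1) ^+ j *
     (hbern p (n - j) x + (n - j)%:R * hbern p.-1 (n - j).-1 x).
Proof.
case: p => // q _ lekn /=.
rewrite (binomial_shift_identity (hbern q.+1 ^~ x) lekn).
by apply: eq_bigr => j _; rewrite hbern_translate.
Qed.
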